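(* Let $\mathbb{K}\in\{\mathbb{R},\mathbb{C}\}$ and let $\mathcal{X}$ be a topological $\mathbb{K}$-vector space whose topological dual $\mathcal{X}^{\ast}$ separates the points of $\mathcal{X}$. Let $F_1,F_2$ be nonempty weak*-closed subsets of $\mathcal{X}^{\ast}$ such that $d_H^{(A)}(F_1,F_2)=0$ for all $A\in\mathcal{X}$. Then $\overline{\mathrm{co}}F_1=\overline{\mathrm{co}}F_2$.
   Context: Topological vector spaces are Hausdorff. $\mathcal{X}^{\ast}$ carries the weak* topology. For nonempty weak*-closed $F,\tilde F\subseteq\mathcal{X}^{\ast}$ and $A\in\mathcal{X}$, $d_H^{(A)}(F,\tilde F)=\max\{\sup_{\sigma\in F}\inf_{\tilde\sigma\in\tilde F}|(\sigma-\tilde\sigma)(A)|,\ \sup_{\tilde\sigma\in\tilde F}\inf_{\sigma\in F}|(\sigma-\tilde\sigma)(A)|\}\in[0,\infty]$. $\overline{\mathrm{co}}F$ denotes the weak*-closure of the convex hull of $F$. *)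

From HB Require Import structures.
From mathcomp Require Import all_boot all_order all_algebra.
From mathcomp Require Import all_classical all_reals all_analysis.
From mathcomp Require Export complex.

Set Implicit Arguments.
Unset Strict Implicit.
Unset Printing Implicit Defensive.

Import Order.TTheory GRing.Theory Num.Theory.
Local Open Scope classical_set_scope.
Local Open Scope ring_scope.

(* Functionals on X live in {ptws X -> K^o}: the functions X -> K with the
   topology of pointwise convergence.  Restricted to the dual X^{*} this is
   exactly the weak* topology. *)

Definition is_dual (K : numFieldType) (X : topologicalLmodType K)
    (f : {ptws X -> K^o}) : Prop :=
  (forall (a : K) (u v : X), f (a *: u + v) = a * f u + f v) /\
  continuous (f : X -> K^o).

(* weak*-closure (in X^{*}) of a set S of functionals: closure in the
   pointwise topology, intersected with X^{*} (subspace topology). *)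
Definition wstar_closure (K : numFieldType) (X : topologicalLmodType K)
    (S : set {ptws X -> K^o}) : set {ptws X -> K^o} :=
  closure S `&` (@is_dual K X).

Definition wstar_closed (K : numFieldType) (X : topologicalLmodType K)
    (S : set {ptws X -> K^o}) : Prop :=
  wstar_closure S `<=` S.

(* Convex hull: all finite convex combinations (nonnegative (real)
   coefficients summing to 1) of elements of S. *)
Definition conv_hull (K : numFieldType) (X : topologicalLmodType K)
    (S : set {ptws X -> K^o}) : set {ptws X -> K^o} :=
  [set g | exists (n : nat) (l : 'I_n -> K) (f : 'I_n -> {ptws X -> K^o}),
     [/\ (forall i, 0 <= l i), \sum_(i < n) l i = 1, (forall i, S (f i)) &
         g = (fun x : X => \sum_(i < n) l i * f i x)]].

Definition clco (K : numFieldType) (X : topologicalLmodType K)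
    (S : set {ptws X -> K^o}) : set {ptws X -> K^o} :=
  wstar_closure (conv_hull S).

(* d_H^{(A)}(F, G) in [0, +oo], where nK : K -> R is the absolute value
   of K (K = R or K = R[i]) with values in the reals R. *)
Definition dH_at (R : realType) (K : numFieldType) (nK : K -> R)
    (X : topologicalLmodType K) (F G : set {ptws X -> K^o}) (A : X) : \bar R :=
  maxe
    (ereal_sup [set ereal_inf [set ((nK (s A - t A))%:E)%E | t in G] | s in F])
    (ereal_sup [set ereal_inf [set ((nK (s A - t A))%:E)%E | s in F] | t in G]).

Definition prop3p10_over (R : realType) (K : numFieldType) (nK : K -> R) : Prop :=
  forall (X : topologicalLmodType K),
    hausdorff_space X ->
    (forall x y : X, x <> y -> exists f, @is_dual K X f /\ f x <> f y) ->
    forall F1 F2 : set {ptws X -> K^o},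
      F1 !=set0 -> F2 !=set0 ->
      F1 `<=` @is_dual K X -> F2 `<=` @is_dual K X ->
      wstar_closed F1 -> wstar_closed F2 ->
      (forall A : X, dH_at nK F1 F2 A = 0%E) ->
      clco F1 = clco F2.

From mathcomp Require Import all_boot all_order all_algebra.
From mathcomp Require Import all_classical all_reals all_analysis.
From mathcomp Require Import complex.
From mathcomp Require Import ring lra.

(* If g lies in the weak*-closed convex hull of F1, then for every point A and
   every e > 0 some s in F1 has Re s(A) > Re g(A) - e, hence, as
   d_H^(A)(F1, F2) = 0, so does some t in F2.  Evaluating at finitely many
   points and taking real coordinates turns functionals into vectors of R^N,
   and every linear form on R^N is Re of the evaluation at some point of X.
   In R^N, a vector dominated in this sense by a set P in every direction lies
   in the closure of the convex hull of P: otherwise its nearest point in that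
   closed convex set would separate it.  As weak* neighbourhoods only see
   finitely many points, g lies in the weak*-closed convex hull of F2. *)

Set Implicit Arguments.
Unset Strict Implicit.
Unset Printing Implicit Defensive.
Import Order.TTheory GRing.Theory Num.Theory.
Import numFieldTopology.Exports.
Local Open Scope classical_set_scope.
Local Open Scope ring_scope.

Section convex_hull.
Variables (R : numDomainType) (V : lmodType R).

Definition is_convex (C : set V) : Prop :=
  forall x y t, C x -> C y -> 0 <= t <= 1 -> C (x + t *: (y - x)).

Definition convex_hull (P : set V) : set V :=
  [set q | exists k (l : 'I_k -> R) (p : 'I_k -> V),
    [/\ (forall i, 0 <= l i), \sum_(i < k) l i = 1, (forall i, P (p i)) &
        q = \sum_(i < k) l i *: p i]].

Lemma convex_hull_sub P : P `<=` convex_hull P.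
Proof.
move=> x Px; exists 1%N, (fun=> 1), (fun=> x).
by split=> //; rewrite big_ord1 ?scale1r.
Qed.

Lemma convex_hull_convex P : is_convex (convex_hull P).
Proof.
move=> _ _ t [k1 [l1 [p1 [l1_ge0 l1_sum Pp1 ->]]]]
  [k2 [l2 [p2 [l2_ge0 l2_sum Pp2 ->]]]] /andP[t_ge0 t_le1].
pose l k := match fintype.split k with inl i => (1 - t) * l1 i | inr j => t * l2 j end.
pose p k := match fintype.split k with inl i => p1 i | inr j => p2 j end.
have splitl (i : 'I_k1) : fintype.split (lshift k2 i) = inl i := unsplitK (inl i).
have splitr (j : 'I_k2) : fintype.split (rshift k1 j) = inr j := unsplitK (inr j).
exists (k1 + k2)%N, l, p; split.
- by move=> k; rewrite /l; case: fintype.split => i; rewrite mulr_ge0 ?subr_ge0.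
- rewrite big_split_ord /l /=.
  under eq_bigr do rewrite splitl.
  under [X in _ + X]eq_bigr do rewrite splitr.
  by rewrite -!mulr_sumr l1_sum l2_sum !mulr1 subrK.
- by move=> k; rewrite /p; case: fintype.split.
- rewrite scalerBr addrCA -{1}[\sum_(i < k1) _]scale1r -scalerBl addrC.
  apply/esym; rewrite big_split_ord /l /p /=.
  under eq_bigr do rewrite splitl.
  under [X in _ + X]eq_bigr do rewrite splitr.
  by rewrite !scaler_sumr; congr (_ + _); apply: eq_bigr => i _; rewrite scalerA.
Qed.

End convex_hull.

Lemma closure_sub_closed (T : topologicalType) (A B : set T) :
  closed B -> A `<=` B -> closure A `<=` B.
Proof. by move=> clB AB; rewrite closureE; exact: smallest_sub. Qed.

Lemma closure_continuous_image (S T : topologicalType) (f : S -> T)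
    (A : set S) (B : set T) :
  continuous f -> (forall x, A x -> closure B (f x)) ->
  forall x, closure A x -> closure B (f x).
Proof.
move=> fc AB; apply: closure_sub_closed => [|//].
by apply: preimage_closed => [x _|]; [exact: fc | exact: closed_closure].
Qed.

Lemma closure_convex (R : numFieldType) (V : normedModType R) (C : set V) :
  is_convex C -> is_convex (closure C).
Proof.
move=> Cconv x y t Cx Cy t01.
have closure_left y' : C y' ->
    forall x', closure C x' -> closure C (x' + t *: (y' - x')).
  move=> Cy'; apply: (@closure_continuous_image _ _ (fun z => z + t *: (y' - z)) C).
    move=> z; apply: cvgD; first exact: cvg_id.
    by apply: cvgZ; [exact: cvg_cst | apply: cvgB; [exact: cvg_cst | exact: cvg_id]].
  by move=> z Cz; apply: subset_closure; exact: Cconv.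
apply: (@closure_continuous_image _ _ (fun z => x + t *: (z - x)) C _ _ _ _ Cy).
  move=> z; apply: cvgD; first exact: cvg_cst.
  by apply: cvgZ; [exact: cvg_cst | apply: cvgB; [exact: cvg_id | exact: cvg_cst]].
by move=> z Cz; exact: closure_left.
Qed.

Section rdot.
Variables (R : realFieldType) (n : nat).
Implicit Types u v w : 'rV[R]_n.

Definition rdot u v : R := \sum_(i < n) u 0 i * v 0 i.

Lemma rdotC u v : rdot u v = rdot v u.
Proof. by apply: eq_bigr => i _; rewrite mulrC. Qed.

Lemma rdotDr u v w : rdot u (v + w) = rdot u v + rdot u w.
Proof. by rewrite -big_split; apply: eq_bigr => i _; rewrite mxE mulrDr. Qed.

Lemma rdotZr u a v : rdot u (a *: v) = a * rdot u v.
Proof. by rewrite mulr_sumr; apply: eq_bigr => i _; rewrite mxE mulrCA. Qed.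

Lemma rdotNr u v : rdot u (- v) = - rdot u v.
Proof. by rewrite -scaleN1r rdotZr mulN1r. Qed.

Lemma rdotBr u v w : rdot u (v - w) = rdot u v - rdot u w.
Proof. by rewrite rdotDr rdotNr. Qed.

Lemma rdotBl u v w : rdot (u - v) w = rdot u w - rdot v w.
Proof. by rewrite rdotC rdotBr !(rdotC w). Qed.

Lemma rdotZl a u v : rdot (a *: u) v = a * rdot u v.
Proof. by rewrite rdotC rdotZr rdotC. Qed.

Lemma rdot_coord_le u i : u 0 i ^+ 2 <= rdot u u.
Proof.
rewrite /rdot (bigD1 i) //= -expr2 lerDl.
by apply: sumr_ge0 => j _; rewrite -expr2 sqr_ge0.
Qed.

Lemma rdot_ge0 u : 0 <= rdot u u.
Proof. by apply: sumr_ge0 => i _; rewrite -expr2 sqr_ge0. Qed.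

Lemma rdot_eq0 u : (rdot u u == 0) = (u == 0).
Proof.
apply/idP/eqP => [|->]; last by rewrite /rdot big1 // => i _; rewrite mxE mul0r.
rewrite psumr_eq0 => [/allP u0|i _]; last by rewrite -expr2 sqr_ge0.
apply/rowP => i; rewrite mxE.
by have /(_ (mem_index_enum _)) := u0 i; rewrite mulf_eq0 orbb => /eqP.
Qed.

Lemma rdot_segment v p y t :
  rdot (v - (p + t *: (y - p))) (v - (p + t *: (y - p))) =
  rdot (v - p) (v - p) - 2 * t * rdot (v - p) (y - p) + t ^+ 2 * rdot (y - p) (y - p).
Proof.
rewrite opprD addrA !(rdotBl, rdotBr, rdotZl, rdotZr).
by rewrite (rdotC p v) (rdotC y v) (rdotC y p); ring.
Qed.

Lemma nearest_obtuse (C : set 'rV[R]_n) v p : is_convex C -> C p ->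
  (forall x, C x -> rdot (v - p) (v - p) <= rdot (v - x) (v - x)) ->
  forall y, C y -> rdot (v - p) (y - p) <= 0.
Proof.
move=> Cconv Cp pmin y Cy; set a := rdot (v - p) (y - p).
set b := rdot (y - p) (y - p); have b_ge0 : 0 <= b by exact: rdot_ge0.
have small_t t : 0 < t <= 1 -> 2 * a <= t * b.
  move=> /andP[t_gt0 t_le1].
  have := pmin _ (Cconv _ _ t Cp Cy (introT andP (conj (ltW t_gt0) t_le1))).
  rewrite rdot_segment -/a -/b => le_dist.
  by rewrite -(ler_pM2l t_gt0); nra.
rewrite leNgt; apply/negP => a_gt0.
have s_gt0 : 0 < a + b + 1 by lra.
(* t := a / (a + b + 1) would give 2 a <= a b / (a + b + 1) < a. *)
have := small_t (a / (a + b + 1)).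
have a_le : a <= a + b + 1 by lra.
rewrite divr_gt0 // ler_pdivrMr // mul1r a_le mulrAC ler_pdivlMr // => /(_ isT).
by nra.
Qed.

End rdot.

Lemma rdot_mxvec (R : realFieldType) p q (w : 'rV[R]_(p * q)) (M : 'M[R]_(p, q)) :
  rdot w (mxvec M) = \sum_(i < p) \sum_(k < q) vec_mx w i k * M i k.
Proof.
rewrite /rdot -{1}(vec_mxK w) (reindex _ (curry_mxvec_bij _ _)) /=.
by rewrite pair_bigA; apply: eq_bigr => -[i k] _ /=; rewrite !mxvecE.
Qed.

Section nearest_point.
Variables (R : realType) (n : nat).
Implicit Types (v w : 'rV[R]_n) (P C : set 'rV[R]_n).

Lemma rdot_dist_continuous v : continuous (fun x : 'rV[R]_n => rdot (v - x) (v - x)).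
Proof.
have -> : (fun x : 'rV[R]_n => rdot (v - x) (v - x)) =
    (fun x : 'rV[R]_n => \sum_(i < n) (v 0 i - x 0 i) * (v 0 i - x 0 i)).
  by apply/funext => x; apply: eq_bigr => i _; rewrite !mxE.
apply: (@continuous_big _ _ +%R 0 xpredT) => [|i _]; first exact: add_continuous.
have coord_dist : continuous (fun x : 'rV[R]_n => v 0 i - x 0 i).
  move=> x; apply: (@continuousB _ _ _ (fun=> v 0 i) (fun x : 'rV[R]_n => x 0 i)).
    exact: cst_continuous.
  exact: (@coord_continuous R 1 n 0 i).
by move=> x; exact: (@continuousM _ _ _ _ x (coord_dist x) (coord_dist x)).
Qed.

Lemma rdot_closed_ball_compact v c : compact [set x | rdot (v - x) (v - x) <= c].
Proof.
set S := [set x | _]; pose M := c + 1.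
pose box := [set x : 'rV[R]_n | forall i, `[v 0 i - M, v 0 i + M]%classic (x 0 i)].
suff -> : S = box `&` S.
  apply: compact_closedI.
    apply: (@rV_compact _ _ (fun i => `[v 0 i - M, v 0 i + M]%classic)) => i.
    exact: segment_compact.
  apply: (@preimage_closed _ _ _ [set r | r <= c]); last exact: closed_le.
  by move=> x _; exact: rdot_dist_continuous.
apply/seteqP; split=> [x Sx|x []//]; split=> // i /=.
have := le_trans (rdot_coord_le (v - x) i) Sx; rewrite !mxE in_itv /= => sq_le.
have sq_ge0 := sqr_ge0 (v 0 i - x 0 i).
by rewrite /M; apply/andP; split; nra.
Qed.

Lemma exists_nearest C v : closed C -> C !=set0 ->
  exists2 p, C p & forall x, C x -> rdot (v - p) (v - p) <= rdot (v - x) (v - x).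
Proof.
move=> Ccl [x0 Cx0]; set d := fun x => rdot (v - x) (v - x).
pose S := C `&` [set x | d x <= d x0].
have Scompact : compact S.
  by rewrite /S setIC; apply: compact_closedI => //; exact: rdot_closed_ball_compact.
have [|p /set_mem [Cp _] pmin] := EVT_min_rV _ Scompact
    (continuous_subspaceT (@rdot_dist_continuous v)).
  by exists x0; split => /=.
exists p => // x Cx; have [dx_le|/ltW dx_ge] := leP (d x) (d x0).
  by apply: pmin; apply/mem_set.
by apply: (le_trans _ dx_ge); apply: pmin; apply/mem_set; split => /=.
Qed.

Lemma closure_convex_hull_sup P v : P !=set0 ->
  (forall w e, 0 < e -> exists2 y, P y & rdot w v - e < rdot w y) ->
  closure (convex_hull P) v.
Proof.
move=> [y0 Py0] sup_ge.
have hull_closure y : P y -> closure (convex_hull P) y.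
  by move=> Py; apply/subset_closure/convex_hull_sub.
have [p Cp pmin] := exists_nearest v (@closed_closure _ (convex_hull P))
  (ex_intro _ y0 (hull_closure _ Py0)).
have obtuse := nearest_obtuse (closure_convex (@convex_hull_convex _ _ P)) Cp pmin.
suff : v - p == 0 by rewrite subr_eq0 => /eqP->.
rewrite -rdot_eq0 eq_le rdot_ge0 andbT leNgt; apply/negP => w_gt0.
have [y Py] := sup_ge (v - p) _ (divr_gt0 w_gt0 (ltr0Sn _ 1)).
have := obtuse y (hull_closure _ Py).
by rewrite !rdotBr in w_gt0 *; lra.
Qed.

End nearest_point.

Lemma convex_comb_lt (R : realFieldType) k (l a : 'I_k -> R) e :
  (forall j, 0 <= l j) -> \sum_(j < k) l j = 1 -> 0 < e ->
  exists j, \sum_(j < k) l j * a j - e < a j.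
Proof.
move=> l_ge0 l_sum e_gt0; apply: contrapT => /forallNP a_small.
have : \sum_(j < k) l j * a j <= \sum_(j < k) l j * (\sum_(j < k) l j * a j - e).
  by apply: ler_sum => j _; rewrite ler_wpM2l // leNgt; apply/negP/a_small.
by rewrite -mulr_suml l_sum mul1r; lra.
Qed.

Lemma dH_at_eq0_approx (R : realType) (K : numFieldType) (nK : K -> R)
    (X : topologicalLmodType K) (F G : set {ptws X -> K^o}) A :
  dH_at nK F G A = 0%E ->
  (forall s, F s -> forall e, 0 < e -> exists2 t, G t & nK (s A - t A) < e) /\
  (forall t, G t -> forall e, 0 < e -> exists2 s, F s & nK (s A - t A) < e).
Proof.
rewrite /dH_at => /eqP; rewrite eq_le ge_max => /andP[/andP[supF supG] _].
split=> [s Fs|t Gt] e e_gt0.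
- have : (ereal_inf [set (nK (s A - t A))%:E | t in G] < e%:E)%E.
    apply: le_lt_trans (le_trans _ supF) _; last by rewrite lte_fin.
    by apply: ereal_sup_ubound; exists s.
  by move=> /ereal_inf_lt [_ [t Gt <-]]; rewrite lte_fin; exists t.
- have : (ereal_inf [set (nK (s A - t A))%:E | s in F] < e%:E)%E.
    apply: le_lt_trans (le_trans _ supG) _; last by rewrite lte_fin.
    by apply: ereal_sup_ubound; exists t.
  by move=> /ereal_inf_lt [_ [s Fs <-]]; rewrite lte_fin; exists s.
Qed.

(* K is handled as the real vector space R^m: emb and re are the embedding of
   R and the real part, and z is recorded through its real coordinates
   re (b k * z), which also control the topology of K (nbhs_coord).  For K = C
   we take b = (1, 'i), whose coordinates are Re z and - Im z. *)
Section realification.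
Variables (R : realType) (K : numFieldType) (nK : K -> R).
Variables (emb : {rmorphism R -> K}) (re : {additive K -> R}) (m : nat) (b : 'I_m -> K).
Hypotheses (emb_ge0 : forall r, 0 <= r -> 0 <= emb r)
  (ge0_emb : forall l, 0 <= l -> exists2 r, 0 <= r & l = emb r)
  (reM : forall r z, re (emb r * z) = r * re z)
  (re1 : re 1 = 1)
  (re_le : forall z, `|re z| <= nK z)
  (re_continuous : continuous (re : K^o -> R))
  (nbhs_coord : forall (z : K^o) (N : set K^o), nbhs z N ->
     exists2 d, 0 < d & forall z', (forall k, `|re (b k * (z' - z))| < d) -> N z').

Lemma re_emb r : re (emb r) = r.
Proof. by rewrite -[emb r]mulr1 reM re1 mulr1. Qed.

Lemma re_ge0 l : 0 <= l -> 0 <= re l.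
Proof. by move=> /ge0_emb [r r_ge0 ->]; rewrite re_emb. Qed.

Lemma reMl_ge0 l z : 0 <= l -> re (l * z) = re l * re z.
Proof. by move=> /ge0_emb [r r_ge0 ->]; rewrite reM re_emb. Qed.

Section dual.
Variable X : topologicalLmodType K.
Implicit Types (F G S : set {ptws X -> K^o}) (g h s t : {ptws X -> K^o}).

Lemma is_dual_sum s n (c : 'I_n -> K) (A : 'I_n -> X) : is_dual s ->
  s (\sum_(i < n) c i *: A i) = \sum_(i < n) c i * s (A i).
Proof.
move=> [s_lin _]; have s0 : s 0 = 0.
  by have := s_lin (-1) 0 0; rewrite scaler0 addr0 mulN1r addNr.
elim: n c A => [|n IHn] c A; first by rewrite !big_ord0.
by rewrite !big_ord_recr /= addrC s_lin IHn addrC.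
Qed.

Definition coords n (A : 'I_n -> X) s : 'rV[R]_(n * m) :=
  mxvec (\matrix_(i, k) re (b k * s (A i))).

Lemma coordsE n (A : 'I_n -> X) s i k :
  coords A s 0 (mxvec_index i k) = re (b k * s (A i)).
Proof. by rewrite mxvecE mxE. Qed.

Lemma coords_eval n (A : 'I_n -> X) (w : 'rV[R]_(n * m)) :
  exists x, forall s, is_dual s -> re (s x) = rdot w (coords A s).
Proof.
exists (\sum_(i < n) (\sum_(k < m) emb (vec_mx w i k) * b k) *: A i) => s s_dual.
rewrite is_dual_sum // raddf_sum rdot_mxvec; apply: eq_bigr => i _.
rewrite mulr_suml raddf_sum; apply: eq_bigr => k _.
by rewrite -mulrA reM !mxE.
Qed.

Lemma coords_conv n (A : 'I_n -> X) k (l : 'I_k -> R) (t : 'I_k -> {ptws X -> K^o}) :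
  coords A (fun x => \sum_(j < k) emb (l j) * t j x) =
  \sum_(j < k) l j *: coords A (t j).
Proof.
apply/rowP => ik; case/mxvec_indexP: ik => i q.
rewrite coordsE summxE mulr_sumr raddf_sum; apply: eq_bigr => j _.
by rewrite !mxE coordsE mulrCA reM.
Qed.

Lemma closure_ptws_coords S g :
  (forall (pts : seq X) d, 0 < d -> exists2 h, S h &
     forall x, x \in pts -> forall k, `|re (b k * (h x - g x))| < d) ->
  closure S g.
Proof.
move=> approx.
(* The sets B (pts, d) form the base of a proper filter on S converging to g. *)
pose D := [set pd : seq X * R | 0 < pd.2].
pose B (pd : seq X * R) := [set h | S h /\
  forall x, x \in pd.1 -> forall k, `|re (b k * (h x - g x))| < pd.2].
have BF : Filter (filter_from D B).
  apply: filter_from_filter; first by exists ([::], 1); rewrite /D /= ltr01.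
  move=> [p1 e1] [p2 e2] /= e1_gt0 e2_gt0; exists (p1 ++ p2, Num.min e1 e2).
    by rewrite /D /= lt_min e1_gt0.
  move=> h [Sh h_near]; split; split=> // x x_p k;
    by apply: lt_le_trans (h_near x _ k) _; rewrite ?mem_cat ?x_p ?orbT ?ge_min ?lexx ?orbT.
have BP : ProperFilter (filter_from D B).
  apply: filter_from_proper => -[pts d] /= d_gt0.
  by have [h Sh h_near] := approx pts d d_gt0; exists h.
rewrite closureEcvg; exists (filter_from D B) => //; split.
  apply/pointwise_cvgP => x N /nbhs_coord [d d_gt0 Nd].
  by exists ([:: x], d) => // h [_ h_near]; apply: Nd => k; apply: h_near; rewrite inE.
by move=> T ST; exists ([::], 1); [rewrite /D /= ltr01 | move=> h [Sh _]; exact: ST].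
Qed.

Lemma closure_conv_hull_re_lt F g x e : closure (conv_hull F) g -> 0 < e ->
  exists2 s, F s & re (g x) - e < re (s x).
Proof.
move=> g_cl e_gt0; have e2_gt0 : 0 < e / 2 by rewrite divr_gt0.
have re_eval_continuous : continuous (fun h : {ptws X -> K^o} => re (h x)).
  by move=> h; apply: continuous_comp; [exact: proj_continuous | exact: re_continuous].
have /cvgrPdist_lt/(_ _ e2_gt0) := re_eval_continuous g.
move=> /g_cl [_ [[k [l [s [l_ge0 l_sum Fs ->]]]] /= h_near]].
have [|j s_j_large] :=
  convex_comb_lt (fun j => re (s j x)) (fun j => re_ge0 (l_ge0 j)) _ e2_gt0.
  by rewrite -raddf_sum l_sum re1.
exists (s j) => //; move: h_near s_j_large.
rewrite raddf_sum (eq_bigr _ (fun j _ => reMl_ge0 (s j x) (l_ge0 j))).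
by move=> /(le_lt_trans (ler_norm _)); lra.
Qed.

Lemma conv_hull_coords n (A : 'I_n -> X) G q : convex_hull (coords A @` G) q ->
  exists2 h, conv_hull G h & coords A h = q.
Proof.
move=> [k [l [p [l_ge0 l_sum Gp ->]]]].
have /choice [t tE] : forall j, exists t, G t /\ coords A t = p j.
  by move=> j; have [t Gt <-] := Gp j; exists t.
exists (fun x => \sum_(j < k) emb (l j) * t j x).
  exists k, (emb \o l), t; split=> //; first by move=> j; exact: emb_ge0.
    by rewrite -rmorph_sum l_sum rmorph1.
  by move=> j; exact: (tE j).1.
by rewrite coords_conv; apply: eq_bigr => j _; rewrite (tE j).2.
Qed.

Lemma closure_conv_hull_sup G g : G !=set0 -> G `<=` @is_dual K X -> is_dual g ->
  (forall x e, 0 < e -> exists2 t, G t & re (g x) - e < re (t x)) ->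
  closure (conv_hull G) g.
Proof.
move=> [t0 Gt0] G_dual g_dual sup_ge; apply: closure_ptws_coords => pts d d_gt0.
pose A (i : 'I_(size pts)) := nth 0 pts i.
have : closure (convex_hull (coords A @` G)) (coords A g).
  apply: closure_convex_hull_sup; first by exists (coords A t0), t0.
  move=> w e e_gt0; have [x xE] := coords_eval A w.
  have [t Gt t_large] := sup_ge x e e_gt0.
  by exists (coords A t); [exists t | rewrite -!xE //; exact: G_dual].
move=> /(_ _ (nbhsx_ballx (coords A g) d d_gt0)).
move=> [_ [/conv_hull_coords [h hull_h <-] [_ /= h_near]]].
exists h => // x x_pts k; have i_lt : (index x pts < size pts)%N by rewrite index_mem.
have := h_near 0 (mxvec_index (Ordinal i_lt) k); rewrite -ball_normE /= !coordsE.
by rewrite /A nth_index // mulrBr raddfB distrC.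
Qed.

Lemma clco_sub F G : G !=set0 -> G `<=` @is_dual K X ->
  (forall x s, F s -> forall e, 0 < e -> exists2 t, G t & `|re (s x - t x)| < e) ->
  clco F `<=` clco G.
Proof.
move=> G0 G_dual approx g [g_cl g_dual]; split=> //.
apply: closure_conv_hull_sup => // x e e_gt0.
have e2_gt0 : 0 < e / 2 by rewrite divr_gt0.
have [s Fs s_large] := closure_conv_hull_re_lt x g_cl e2_gt0.
have [t Gt t_near] := approx x s Fs _ e2_gt0.
exists t => //; move: s_large t_near; rewrite raddfB.
by move=> ? /(le_lt_trans (ler_norm _)); lra.
Qed.

End dual.

Lemma prop3p10_over_coords : prop3p10_over nK.
Proof.
move=> X _ _ F1 F2 F1_0 F2_0 F1_dual F2_dual _ _ dH0.
apply/seteqP; split; apply: clco_sub => // x s Fs e e_gt0.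
- have [t Gt lt_t] := (dH_at_eq0_approx (dH0 x)).1 s Fs e e_gt0.
  by exists t => //; exact: le_lt_trans (re_le _) lt_t.
- have [t Ft lt_t] := (dH_at_eq0_approx (dH0 x)).2 s Fs e e_gt0.
  by exists t => //; rewrite -normrN -raddfN opprB; exact: le_lt_trans (re_le _) lt_t.
Qed.

End realification.

Lemma prop3p10_over_real (R : realType) :
  @prop3p10_over R (R : numFieldType) (@Num.norm R R).
Proof.
apply: (@prop3p10_over_coords R R _ idfun idfun 1 (fun=> 1)) => //.
- by move=> l l_ge0; exists l.
- by move=> z; exact: cvg_id.
- move=> z N /nbhs_ballP [d d_gt0 zd_N]; exists d => // z' z'_near.
  by apply: zd_N; rewrite -ball_normE /= distrC -[z' - z]mul1r; exact: z'_near 0.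
Qed.

Lemma sqrt_sum_sqr_le (R : rcfType) (a c : R) :
  Num.sqrt (a ^+ 2 + c ^+ 2) <= `|a| + `|c|.
Proof.
have -> : `|a| + `|c| = Num.sqrt ((`|a| + `|c|) ^+ 2).
  by rewrite sqrtr_sqr (ger0_norm (addr_ge0 (normr_ge0 a) (normr_ge0 c))).
apply: ler_wsqrtr; have := mulr_ge0 (normr_ge0 a) (normr_ge0 c).
by rewrite sqrrD !real_normK ?num_real //; lra.
Qed.

Lemma prop3p10_over_complex (R : realType) :
  @prop3p10_over R (R[i] : numFieldType) (@Normc.normc R).
Proof.
pose b (k : 'I_2) : R[i] := if k == 0 then 1 else 'i%C.
apply: (@prop3p10_over_coords R R[i] _ (real_complex R) (@complex.Re R) 2 b).
- by move=> r r_ge0; rewrite lecE /= eqxx.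
- by move=> [a c]; rewrite lecE /= => /andP[/eqP -> a_ge0]; exists a.
- by move=> r [a c] /=; ring.
- by [].
- move=> [a c] /=; rewrite -sqrtr_sqr; apply: ler_wsqrtr.
  by rewrite lerDl sqr_ge0.
- move=> z N /nbhs_ballP [e e_gt0 eN]; apply/nbhs_ballP.
  exists (e%:C)%C => [|z']; first by rewrite /= ltcE /= eqxx.
  rewrite -ball_normE /= => z_z'; apply: eN; rewrite -ball_normE /= -ltcR -raddfB.
  exact: le_lt_trans (normc_ge_Re _) z_z'.
- move=> z N /nbhs_ballP [d d_gt0 zd_N].
  move: d_gt0 zd_N; case: d => r s; rewrite /= ltcE /= => /andP[/eqP -> r_gt0] zd_N.
  exists (r / 2) => [|z' z'_near]; first by rewrite divr_gt0.
  apply: zd_N; rewrite -ball_normE /= distrC.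
  have := z'_near 0; have := z'_near 1; rewrite /b /= mul1r mulrC ReiNIm normrN.
  have := sqrt_sum_sqr_le (complex.Re (z' - z)) (complex.Im (z' - z)).
  by rewrite normc_def ltcR; lra.
Qed.

Unset Implicit Arguments.
Theorem proposition3p10 (R : realType) :
  @prop3p10_over R (R : numFieldType) (@Num.norm R R) /\
  @prop3p10_over R (R[i] : numFieldType) (@Normc.normc R).
Proof. split; [exact: prop3p10_over_real | exact: prop3p10_over_complex]. Qed.
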